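(* Assume the Framework and the Purification Postulate. A pure state $\Psi\in\mathfrak S_1(\mathrm A\mathrm C)$ is dynamically faithful for system $\mathrm A$ if and only if its marginal $\omega:=(\mathcal I_{\mathrm A}\otimes e_{\mathrm C})\Psi$ is an internal state of $\mathrm A$. In particular, any purification of an internal state of $\mathrm A$ is dynamically faithful for $\mathrm A$.
   Context: Framework. We work in an operational-probabilistic theory: there is a collection of systems $\mathrm A,\mathrm B,\dots$, closed under a composition $\mathrm A\mathrm B$ (associative, symmetric up to a reversible swap, with a trivial system $\mathrm I$ satisfying $\mathrm A\mathrm I=\mathrm A$); for each pair of systems a set $\mathfrak T(\mathrm A,\mathrm B)$ of transformations; a test from $\mathrm A$ to $\mathrm B$ is a finite collection $\{\mathcal C_i\}_{i\in X}\subseteq\mathfrak T(\mathrm A,\mathrm B)$, and every transformation belongs to some test. Tests are closed under sequential composition, parallel composition ($\otimes$), coarse-graining (summing outcomes over the blocks of a partition of $X$) and conditioning (choosing the next test depending on the outcome of the previous one). States of $\mathrm A$ are the elements of $\mathfrak S(\mathrm A):=\mathfrak T(\mathrm I,\mathrm A)$, effects are the elements of $\mathfrak T(\mathrm A,\mathrm I)$, and transformations $\mathrm I\to\mathrm I$ are probabilities in $[0,1]$ (those of a test sum to $1$; composition is multiplication). An effect $a$ and a state $\rho$ give the probability $(a|\rho)$. States (effects) are identified when they give equal probabilities on all effects (states); transformations $\mathcal C,\mathcal C'$ are identified when $\mathcal C\otimes\mathcal I_{\mathrm S}$ and $\mathcal C'\otimes\mathcal I_{\mathrm S}$ act identically on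 all states of $\mathrm A\mathrm S$ for every system $\mathrm S$. States span a finite-dimensional real vector space $\mathfrak S_{\mathbb R}(\mathrm A)$, transformations act linearly, and $\mathfrak T_{\mathbb R}(\mathrm A,\mathrm B)$ is the real span of $\mathfrak T(\mathrm A,\mathrm B)$. Standing assumptions: (i) causality: each system $\mathrm A$ has a unique deterministic effect $e_{\mathrm A}$ (the effect forming a one-outcome observation test), and $e_{\mathrm A\mathrm B}=e_{\mathrm A}\otimes e_{\mathrm B}$; (ii) local discriminability: if two states of $\mathrm A\mathrm B$ differ, some product effect $a\otimes b$ gives them different probabilities; (iii) all sets of states are closed, the theory is not deterministic (hence all sets of states, effects and transformations are convex), and perfectly distinguishable states exist. A state $\rho$ is normalized if $(e|\rho)=1$; $\mathfrak S_1(\mathrm A)$ is the set of normalized states. A channel is a $\mathcal C\in\mathfrak T(\mathrm A,\mathrm B)$ with $e_{\mathrm B}\circ\mathcal C=e_{\mathrm A}$. A channel $\mathcal U\in\mathfrak T(\mathrm A,\mathrm B)$ is reversible if some channel $\mathcal W\in\mathfrak T(\mathrm B,\mathrm A)$ satisfies $\mathcal W\mathcal U=\mathcal I_{\mathrm A}$, $\mathcal U\mathcal W=\mathcal I_{\mathrm B}$; $\mathbf G_{\mathrm A}$ is the group of reversible channels on $\mathrm A$. The marginal of a state $\sigma$ of $\mathrm A\mathrm B$ on $\mathrm A$ is $(\mathcal I_{\mathrm A}\otimes e_{\mathrm B})\sigma$. Refinement. For $\mathcal C\in\mathfrak T(\mathrm A,\mathrm B)$, write $\mathcal D\prec\mathcal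 C$ if there are a test $\{\mathcal D_j\}_{j\in Y}$ and $Y_0\subseteq Y$ with $\mathcal C=\sum_{j\in Y_0}\mathcal D_j$ and $\mathcal D\in\{\mathcal D_j\}_{j\in Y_0}$; the refinement set is $D_{\mathcal C}=\{\mathcal D:\mathcal D\prec\mathcal C\}$. $\mathcal C$ is atomic if $\mathcal D\prec\mathcal C$ implies $\mathcal D=\lambda\mathcal C$ for some $\lambda\in[0,1]$. A pure state is an atomic state; a state is mixed otherwise. A state $\omega$ of $\mathrm A$ is internal if $\mathrm{Span}(D_\omega)=\mathfrak S_{\mathbb R}(\mathrm A)$. Purification Postulate. For every $\rho\in\mathfrak S_1(\mathrm A)$ there are a system $\mathrm B$ and a pure $\Psi\in\mathfrak S_1(\mathrm A\mathrm B)$ with $(\mathcal I_{\mathrm A}\otimes e_{\mathrm B})\Psi=\rho$ (a purification of $\rho$, with purifying system $\mathrm B$); and if $\Psi,\Psi'\in\mathfrak S_1(\mathrm A\mathrm B)$ are purifications of the same state, then $\Psi'=(\mathcal I_{\mathrm A}\otimes\mathcal U)\Psi$ for some $\mathcal U\in\mathbf G_{\mathrm B}$. A state $\sigma\in\mathfrak S(\mathrm A\mathrm C)$ is dynamically faithful for system $\mathrm A$ if for every system $\mathrm B$ and every $\mathcal A,\mathcal A'\in\mathfrak T(\mathrm A,\mathrm B)$, $(\mathcal A\otimes\mathcal I_{\mathrm C})\sigma=(\mathcal A'\otimes\mathcal I_{\mathrm C})\sigma$ implies $\mathcal A=\mathcal A'$. *)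

From Stdlib Require Import Reals List Permutation.
Import ListNotations.
Open Scope R_scope.
Set Implicit Arguments.

(* Data of an OPT.  [TR A B] is the real vector space T_R(A,B) spanned by    *)
(* the physical transformations; [phys] carves out the set T(A,B).           *)
(* Transformations are stored modulo the operational identification, so     *)
(* equality of transformations is Leibniz equality (see the separation       *)
(* axioms below).  Systems compose strictly associatively with unit I.       *)
Record OPTData := {
  Sys : Type;
  sysC : Sys -> Sys -> Sys;
  sysI : Sys;
  sysC_assoc : forall A B C, sysC (sysC A B) C = sysC A (sysC B C);
  sysC_unitr : forall A, sysC A sysI = A;
  sysC_unitl : forall A, sysC sysI A = A;
  TR : Sys -> Sys -> Type;
  addT : forall A B, TR A B -> TR A B -> TR A B;
  scaleT : forall A B, R -> TR A B -> TR A B;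
  zeroT : forall A B, TR A B;
  seqT : forall A B C, TR B C -> TR A B -> TR A C;   (* seqT g f = g o f *)
  parT : forall A B C D, TR A B -> TR C D -> TR (sysC A C) (sysC B D);
  idT : forall A, TR A A;
  swapT : forall A B, TR (sysC A B) (sysC B A);
  phys : forall A B, TR A B -> Prop;
  isTest : forall A B, list (TR A B) -> Prop;
  prob : TR sysI sysI -> R                  (* identification T_R(I,I) = R *)
}.

Arguments sysC {o}.
Arguments sysI {o}.
Arguments TR {o}.
Arguments addT {o A B}.
Arguments scaleT {o A B}.
Arguments zeroT {o A B}.
Arguments seqT {o A B C}.
Arguments parT {o A B C D}.
Arguments idT {o}.
Arguments swapT {o}.
Arguments phys {o A B}.
Arguments isTest {o A B}.
Arguments prob {o}.
Arguments sysC_assoc {o}.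
Arguments sysC_unitr {o}.
Arguments sysC_unitl {o}.

Section Basic.
Variable T : OPTData.

Definition castT {A A' B B' : Sys T} (e1 : A = A') (e2 : B = B') (f : TR A B)
  : TR A' B' :=
  eq_rect B (fun Y => TR A' Y) (eq_rect A (fun X => TR X B) f A' e1) B' e2.

Definition sumT {A B : Sys T} (l : list (TR A B)) : TR A B :=
  fold_right addT zeroT l.

Definition lincomb {A B : Sys T} (l : list (R * TR A B)) : TR A B :=
  fold_right (fun p acc => addT (scaleT (fst p) (snd p)) acc) zeroT l.

Definition inSpan {A B : Sys T} (P : TR A B -> Prop) (v : TR A B) : Prop :=
  exists l : list (R * TR A B), Forall (fun p => P (snd p)) l /\ v = lincomb l.

Definition effect_on_pair {A B : Sys T} (a : TR A sysI) (b : TR B sysI)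
  : TR (sysC A B) sysI :=
  castT eq_refl (sysC_unitr sysI) (parT a b).

End Basic.

Arguments castT {T A A' B B'}.
Arguments sumT {T A B}.
Arguments lincomb {T A B}.
Arguments inSpan {T A B}.
Arguments effect_on_pair {T A B}.

Record OPTAxioms (T : OPTData) : Prop := {
  add_comm : forall (A B : Sys T) (v w : TR A B), addT v w = addT w v;
  add_assoc : forall (A B : Sys T) (u v w : TR A B), addT u (addT v w) = addT (addT u v) w;
  add_zero : forall (A B : Sys T) (v : TR A B), addT v zeroT = v;
  scale_one : forall (A B : Sys T) (v : TR A B), scaleT 1 v = v;
  scale_zero : forall (A B : Sys T) (v : TR A B), scaleT 0 v = zeroT;
  scale_assoc : forall (A B : Sys T) r s (v : TR A B), scaleT r (scaleT s v) = scaleT (r * s) v;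
  scale_addl : forall (A B : Sys T) r s (v : TR A B),
      scaleT (r + s) v = addT (scaleT r v) (scaleT s v);
  scale_addr : forall (A B : Sys T) r (v w : TR A B),
      scaleT r (addT v w) = addT (scaleT r v) (scaleT r w);
  span_phys : forall (A B : Sys T) (v : TR A B), inSpan (fun f => phys f) v;
  states_findim : forall A : Sys T, exists l : list (TR sysI A),
      forall v : TR sysI A, inSpan (fun x => In x l) v;
  seq_addl : forall (A B C : Sys T) (g g' : TR B C) (f : TR A B),
      seqT (addT g g') f = addT (seqT g f) (seqT g' f);
  seq_addr : forall (A B C : Sys T) (g : TR B C) (f f' : TR A B),
      seqT g (addT f f') = addT (seqT g f) (seqT g f');
  seq_scalel : forall (A B C : Sys T) r (g : TR B C) (f : TR A B),
      seqT (scaleT r g) f = scaleT r (seqT g f);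
  seq_scaler : forall (A B C : Sys T) r (g : TR B C) (f : TR A B),
      seqT g (scaleT r f) = scaleT r (seqT g f);
  par_addl : forall (A B C D : Sys T) (f f' : TR A B) (g : TR C D),
      parT (addT f f') g = addT (parT f g) (parT f' g);
  par_addr : forall (A B C D : Sys T) (f : TR A B) (g g' : TR C D),
      parT f (addT g g') = addT (parT f g) (parT f g');
  par_scalel : forall (A B C D : Sys T) r (f : TR A B) (g : TR C D),
      parT (scaleT r f) g = scaleT r (parT f g);
  par_scaler : forall (A B C D : Sys T) r (f : TR A B) (g : TR C D),
      parT f (scaleT r g) = scaleT r (parT f g);
  seq_assoc : forall (A B C D : Sys T) (h : TR C D) (g : TR B C) (f : TR A B),
      seqT h (seqT g f) = seqT (seqT h g) f;
  seq_idl : forall (A B : Sys T) (f : TR A B), seqT (idT B) f = f;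
  seq_idr : forall (A B : Sys T) (f : TR A B), seqT f (idT A) = f;
  par_seq : forall (A B C A' B' C' : Sys T) (g : TR B C) (f : TR A B) (g' : TR B' C') (f' : TR A' B'),
      parT (seqT g f) (seqT g' f') = seqT (parT g g') (parT f f');
  par_id : forall A B : Sys T, parT (idT A) (idT B) = idT (sysC A B);
  par_assoc : forall (A B C D E F : Sys T) (f : TR A B) (g : TR C D) (h : TR E F),
      castT (sysC_assoc A C E) (sysC_assoc B D F) (parT (parT f g) h)
      = parT f (parT g h);
  par_unitr : forall (A B : Sys T) (f : TR A B) ,
      castT (sysC_unitr A) (sysC_unitr B) (parT f (idT sysI)) = f;
  par_unitl : forall (A B : Sys T) (f : TR A B) ,
      castT (sysC_unitl A) (sysC_unitl B) (parT (idT sysI) f) = f;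
  swap_nat : forall (A B C D : Sys T) (f : TR A B) (g : TR C D),
      seqT (swapT B D) (parT f g) = seqT (parT g f) (swapT A C);
  swap_inv : forall A B : Sys T, seqT (swapT B A) (swapT A B) = idT (sysC A B);
  swap_hex : forall A B C : Sys T,
      swapT A (sysC B C)
      = castT eq_refl (eq_sym (sysC_assoc B C A))
          (seqT (parT (idT B) (swapT A C))
                (castT (sysC_assoc A B C) (sysC_assoc B A C)
                       (parT (swapT A B) (idT C))));
  prob_add : forall p q : TR (o:=T) sysI sysI, prob (addT p q) = prob p + prob q;
  prob_scale : forall (r : R) (p : TR (o:=T) sysI sysI), prob (scaleT r p) = r * prob p;
  prob_inj : forall p q : TR (o:=T) sysI sysI, prob p = prob q -> p = q;
  prob_surj : forall r : R, exists p : TR (o:=T) sysI sysI, prob p = r;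
  prob_id : prob (idT (sysI (o:=T))) = 1;
  prob_seq : forall p q : TR (o:=T) sysI sysI, prob (seqT p q) = prob p * prob q;
  phys_prob : forall p : TR (o:=T) sysI sysI, phys p <-> 0 <= prob p <= 1;
  scalar_action : forall (A B : Sys T) (p : TR sysI sysI) (f : TR A B),
      castT (sysC_unitl A) (sysC_unitl B) (parT p f) = scaleT (prob p) f;
  test_phys : forall (A B : Sys T) (l : list (TR A B)), isTest l -> Forall (fun f => phys f) l;
  phys_test : forall (A B : Sys T) (f : TR A B), phys f -> exists l, isTest l /\ In f l;
  test_perm : forall (A B : Sys T) (l l' : list (TR A B)), Permutation l l' -> isTest l -> isTest l';
  test_id : forall A : Sys T, isTest [idT A];
  test_swap : forall A B : Sys T, isTest [swapT A B];
  test_seq : forall (A B C : Sys T) (l : list (TR A B)) (m : list (TR B C)),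
      isTest l -> isTest m -> isTest (flat_map (fun f => map (fun g => seqT g f) m) l);
  test_par : forall (A B C D : Sys T) (l : list (TR A B)) (m : list (TR C D)),
      isTest l -> isTest m -> isTest (flat_map (fun f => map (fun g => parT f g) m) l);
  test_coarse : forall (A B : Sys T) (l1 l2 : list (TR A B)),
      isTest (l1 ++ l2) -> l1 <> [] -> isTest (sumT l1 :: l2);
  test_cond : forall (A B C : Sys T) (l : list (TR A B)) (k : nat -> list (TR B C)),
      isTest l -> (forall i, (i < length l)%nat -> isTest (k i)) ->
      isTest (flat_map (fun p => map (fun g => seqT g (snd p)) (k (fst p)))
                       (combine (seq 0 (length l)) l));
  test_prob : forall l : list (TR (o:=T) sysI sysI), isTest l ->
      fold_right (fun p s => prob p + s) 0 l = 1;
  state_sep : forall (A : Sys T) (v w : TR sysI A),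
      (forall a : TR A sysI, phys a -> seqT a v = seqT a w) -> v = w;
  effect_sep : forall (A : Sys T) (a b : TR A sysI),
      (forall v : TR sysI A, phys v -> seqT a v = seqT b v) -> a = b;
  transf_sep : forall (A B : Sys T) (f g : TR A B),
      (forall (S : Sys T) (v : TR sysI (sysC A S)), phys v ->
         seqT (parT f (idT S)) v = seqT (parT g (idT S)) v) -> f = g
}.

Section Notions.
Variable T : OPTData.
Variable eff : forall A : Sys T, TR A sysI.   (* the deterministic effects *)

Definition causal : Prop :=
  (forall (A : Sys T) (e : TR A sysI), isTest [e] <-> e = eff A) /\
  (forall A B, eff (sysC A B) = effect_on_pair (eff A) (eff B)).

Definition local_discriminability : Prop :=
  forall (A B : Sys T) (r s : TR sysI (sysC A B)), phys r -> phys s -> r <> s ->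
    exists (a : TR A sysI) (b : TR B sysI), phys a /\ phys b /\
      prob (seqT (effect_on_pair a b) r) <> prob (seqT (effect_on_pair a b) s).

(* (iii) closedness of sets of states (in the unique Hausdorff vector
   topology of the finite-dimensional space; convergence is tested on the
   physical effects, which span the dual space) *)
Definition states_closed : Prop :=
  forall (A : Sys T) (rs : nat -> TR sysI A) (v : TR sysI A),
    (forall n, phys (rs n)) ->
    (forall a : TR A sysI, phys a ->
       Un_cv (fun n => prob (seqT a (rs n))) (prob (seqT a v))) ->
    phys v.

Definition not_deterministic : Prop :=
  exists p : TR (o:=T) sysI sysI, phys p /\ 0 < prob p < 1.

Definition convexity : Prop :=
  forall (A B : Sys T) (f g : TR A B) (p : R), phys f -> phys g -> 0 <= p <= 1 ->
    phys (addT (scaleT p f) (scaleT (1 - p) g)).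

Definition normalized {A : Sys T} (r : TR sysI A) : Prop :=
  phys r /\ prob (seqT (eff A) r) = 1.

Definition perfectly_distinguishable_exist : Prop :=
  exists (A : Sys T) (r0 r1 : TR sysI A) (a0 a1 : TR A sysI),
    normalized r0 /\ normalized r1 /\ isTest [a0; a1] /\
    prob (seqT a0 r0) = 1 /\ prob (seqT a1 r0) = 0 /\
    prob (seqT a0 r1) = 0 /\ prob (seqT a1 r1) = 1.

Definition channel {A B : Sys T} (f : TR A B) : Prop :=
  phys f /\ seqT (eff B) f = eff A.

Definition reversible {A B : Sys T} (u : TR A B) : Prop :=
  channel u /\ exists w : TR B A, channel w /\ seqT w u = idT A /\ seqT u w = idT B.

Definition marginal {A C : Sys T} (P : TR sysI (sysC A C)) : TR sysI A :=
  castT eq_refl (sysC_unitr A) (seqT (parT (idT A) (eff C)) P).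

Definition refines {A B : Sys T} (D C : TR A B) : Prop :=
  exists l1 l2 : list (TR A B), isTest (l1 ++ l2) /\ C = sumT l1 /\ In D l1.

Definition atomic {A B : Sys T} (C : TR A B) : Prop :=
  forall D, refines D C -> exists lam, 0 <= lam <= 1 /\ D = scaleT lam C.

Definition pure_state {A : Sys T} (r : TR sysI A) : Prop := phys r /\ atomic r.

Definition internal {A} (w : TR sysI A) : Prop :=
  phys w /\ forall v : TR sysI A, inSpan (fun d => refines d w) v.

Definition purification {A B : Sys T} (r : TR sysI A) (P : TR sysI (sysC A B)) : Prop :=
  normalized P /\ pure_state P /\ marginal P = r.

Definition purification_postulate : Prop :=
  (forall (A : Sys T) (r : TR sysI A), normalized r -> exists B (P : TR sysI (sysC A B)),
      purification r P) /\
  (forall (A B : Sys T) (r : TR sysI A) (P P' : TR sysI (sysC A B)),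
      normalized r -> purification r P -> purification r P' ->
      exists U : TR B B, reversible U /\ P' = seqT (parT (idT A) U) P).

Definition dynamically_faithful {A C : Sys T} (s : TR sysI (sysC A C)) : Prop :=
  forall (B : Sys T) (f g : TR A B), phys f -> phys g ->
    seqT (parT f (idT C)) s = seqT (parT g (idT C)) s -> f = g.

End Notions.

Arguments causal {T}.
Arguments normalized {T} eff {A}.
Arguments perfectly_distinguishable_exist {T}.
Arguments channel {T} eff {A B}.
Arguments reversible {T} eff {A B}.
Arguments marginal {T} eff {A C}.
Arguments refines {T A B}.
Arguments atomic {T A B}.
Arguments pure_state {T A}.
Arguments internal {T A}.
Arguments purification {T} eff {A B}.
Arguments purification_postulate {T}.
Arguments dynamically_faithful {T A C}.

From Stdlib Require Import Reals List Lra Lia Permutation ProofIrrelevance Classical.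
Import ListNotations.
Open Scope R_scope.

(* Both directions go through the conditional
   states [cond b P] of [A], obtained by applying an effect [b] of [C] to [P].
   - Internal => faithful (steering).  A refinement [d] of [omega = d + s]
     is steered by a purification of [d (x) r0 + s (x) r1], with [r0, r1]
     perfectly distinguishable; uniqueness of purification, applied to
     [P (x) Phi] and a reordering of [Phi (x) P], transfers this to [P].  So
     if [omega] is internal every state is some [cond b P], and maps agreeing
     on [P] agree on all states, hence coincide by local discriminability.
   - Faithful => internal.  Faithfulness makes the pairing of effects of [A]
     with conditional states nondegenerate; a double-orthogonality argument
     in coordinates shows every state is some [cond c P], a combination of
     the refinements [cond b P] of [omega] with [b] physical. *)

(* Coordinate vectors are functions [nat -> R] of which only the first [n]
   entries matter; [dot n] is the standard inner product on those entries. *)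
Fixpoint dot (n : nat) (x y : nat -> R) : R :=
  match n with
  | O => 0
  | S n' => x O * y O + dot n' (fun i => x (S i)) (fun i => y (S i))
  end.

Definition subspace (X : (nat -> R) -> Prop) : Prop :=
  X (fun _ => 0) /\
  (forall x y, X x -> X y -> X (fun i => x i + y i)) /\
  (forall r x, X x -> X (fun i => r * x i)).

Lemma dot_ext n x x' y y' :
  (forall i, (i < n)%nat -> x i = x' i) -> (forall i, (i < n)%nat -> y i = y' i) ->
  dot n x y = dot n x' y'.
Proof.
  revert x x' y y'; induction n as [|n IH]; intros x x' y y' Hx Hy; simpl; auto.
  rewrite Hx, Hy by lia. f_equal. apply IH; intros i Hi; [apply Hx|apply Hy]; lia.
Qed.

Lemma dot_sym n x y : dot n x y = dot n y x.
Proof. revert x y; induction n as [|n IH]; intros; simpl; auto. rewrite IH. ring. Qed.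

Lemma dot_zero_l n y : dot n (fun _ => 0) y = 0.
Proof. revert y; induction n as [|n IH]; intros; simpl. ring. rewrite IH. ring. Qed.

Lemma dot_lin_r n y a c b : dot n y (fun k => a k - c * b k) = dot n y a - c * dot n y b.
Proof. revert y a b; induction n as [|n IH]; intros; simpl. ring. rewrite IH. ring. Qed.

Lemma dot_lin_l n k u v x : dot n (fun j => k * (u j - v j)) x = k * (dot n u x - dot n v x).
Proof. revert u v x; induction n as [|n IH]; intros; simpl. ring. rewrite IH. ring. Qed.

Definition separated (n : nat) (X : (nat -> R) -> Prop) (z : nat -> R) : Prop :=
  (exists x, X x /\ forall j, (j < n)%nat -> x j = z j) \/
  (exists y, (forall x, X x -> dot n y x = 0) /\ dot n y z <> 0).

(* The vectors of [X] vanishing at entry 0, with that entry dropped: the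
   subspace used to eliminate the first coordinate. *)
Definition shift_kernel (X : (nat -> R) -> Prop) (u : nat -> R) : Prop :=
  exists x, X x /\ x O = 0 /\ forall i, x (S i) = u i.

Lemma shift_kernel_subspace X : subspace X -> subspace (shift_kernel X).
Proof.
  intros [H0 [Hadd Hsc]]. split; [|split].
  - exists (fun _ => 0). auto.
  - intros u v [x [Hx [Hx0 Hxs]]] [y [Hy [Hy0 Hys]]]. exists (fun i => x i + y i).
    split; auto. split. rewrite Hx0, Hy0; ring. intros; rewrite Hxs, Hys; auto.
  - intros r u [x [Hx [Hx0 Hxs]]]. exists (fun i => r * x i). split; auto.
    split. rewrite Hx0; ring. intros; rewrite Hxs; auto.
Qed.

Lemma separated_pivot n X e z : subspace X -> X e -> e O = 1 ->
  separated n (shift_kernel X) (fun i => z (S i) - z O * e (S i)) -> separated (S n) X z.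
Proof.
  intros [H0 [Hadd Hsc]] He He0 [[u [[x [Hx [Hx0 Hxs]]] Hu]]|[y [Hy Hyz]]].
  - left. exists (fun i => x i + z O * e i). split; [apply Hadd; auto|].
    intros [|j] Hj; [rewrite Hx0, He0; ring|]. rewrite Hxs, Hu by lia. ring.
  - right. exists (fun i => match i with O => - dot n y (fun k => e (S k)) | S k => y k end).
    simpl. change (fun i => y i) with y. split.
    + intros x Hx.
      assert (Hk : shift_kernel X (fun k => x (S k) - x O * e (S k))).
      { exists (fun i => x i + (- x O) * e i). split; [apply Hadd; auto|].
        split; [rewrite He0; ring|intros; ring]. }
      specialize (Hy _ Hk). rewrite dot_lin_r in Hy. lra.
    + intro Hc. apply Hyz. rewrite dot_lin_r. lra.
Qed.

Lemma separated_no_pivot n X z : (forall x, X x -> x O = 0) ->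
  separated n (shift_kernel X) (fun i => z (S i)) -> separated (S n) X z.
Proof.
  intros Hh Hsep. destruct (Req_dec (z O) 0) as [Hz|Hz].
  - destruct Hsep as [[u [[x [Hx [Hx0 Hxs]]] Hu]]|[y [Hy Hyz]]].
    + left. exists x. split; auto. intros [|j] Hj; [rewrite Hx0, Hz; auto|].
      rewrite Hxs, Hu by lia. auto.
    + right. exists (fun i => match i with O => 0 | S k => y k end).
      simpl. change (fun i => y i) with y. split.
      * intros x Hx. rewrite (Hy (fun i => x (S i))); [ring|]. exists x. auto.
      * rewrite Rmult_0_l, Rplus_0_l. auto.
  - right. exists (fun i => match i with O => 1 | S k => 0 end). simpl. split.
    + intros x Hx. rewrite Hh, dot_zero_l; auto. ring.
    + rewrite dot_zero_l. lra.
Qed.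

Lemma subspace_separation n : forall X z, subspace X -> separated n X z.
Proof.
  induction n as [|n IH]; intros X z SX.
  - left. exists (fun _ => 0). split; [apply SX|intros; lia].
  - destruct (classic (exists e, X e /\ e O <> 0)) as [[e [He He0]]|Hno].
    + apply (separated_pivot n X (fun i => / e O * e i)); auto.
      * apply SX, He.
      * field. auto.
      * apply IH, shift_kernel_subspace, SX.
    + apply separated_no_pivot; [|apply IH, shift_kernel_subspace, SX].
      intros x Hx. apply NNPP. intro Hx0. apply Hno. eauto.
Qed.

Lemma subspace_full n (S Q : (nat -> R) -> Prop) :
  subspace S -> subspace Q ->
  (forall x, (forall y, Q y -> dot n y x = 0) -> S x) ->
  (forall y, Q y -> (forall x, S x -> dot n y x = 0) -> forall j, (j < n)%nat -> y j = 0) ->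
  forall x, exists x', S x' /\ forall j, (j < n)%nat -> x' j = x j.
Proof.
  intros SS SQ HQS HSQ x.
  destruct (subspace_separation n S x SS) as [Hx|[y [Hy Hyx]]]; [exact Hx|exfalso].
  destruct (subspace_separation n Q y SQ) as [[y' [Hy' Hag]]|[x' [Hx' Hxy]]].
  - apply Hyx.
    assert (Hy0 : forall j, (j < n)%nat -> y j = 0).
    { intros j Hj. rewrite <- Hag by exact Hj. apply (HSQ y' Hy'); auto.
      intros x0 Hx0. rewrite (dot_ext n y' y x0 x0) by auto. auto. }
    rewrite (dot_ext n y (fun _ => 0) x x) by auto. apply dot_zero_l.
  - apply Hxy. rewrite dot_sym. apply Hy, HQS. intros y0 Hy0. rewrite dot_sym. auto.
Qed.

Section Transport.
Context {T : OPTData}.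

Lemma cast_loop {A B : Sys T} (e1 : A = A) (e2 : B = B) (f : TR A B) : castT e1 e2 f = f.
Proof. rewrite (proof_irrelevance _ e1 eq_refl), (proof_irrelevance _ e2 eq_refl). reflexivity. Qed.

Lemma cast_irr {A A' B B' : Sys T} (e1 e1' : A = A') (e2 e2' : B = B') (f : TR A B) :
  castT e1 e2 f = castT e1' e2' f.
Proof. rewrite (proof_irrelevance _ e1 e1'), (proof_irrelevance _ e2 e2'). reflexivity. Qed.

Lemma cast_trans {A A' A'' B B' B'' : Sys T} (e1 : A = A') (e2 : B = B') (e1' : A' = A'')
  (e2' : B' = B'') (f : TR A B) :
  castT e1' e2' (castT e1 e2 f) = castT (eq_trans e1 e1') (eq_trans e2 e2') f.
Proof. destruct e1, e2, e1', e2'. reflexivity. Qed.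

Lemma cast_seq {A A' B B' C C' : Sys T} (e1 : A = A') (e2 : B = B') (e3 : C = C')
  (g : TR B C) (f : TR A B) :
  castT e1 e3 (seqT g f) = seqT (castT e2 e3 g) (castT e1 e2 f).
Proof. destruct e1, e2, e3. reflexivity. Qed.

Lemma seq_castl {A B B' C C' : Sys T} (e1 : B = B') (e2 : C = C') (g : TR B C) (f : TR A B') :
  seqT (castT e1 e2 g) f = castT eq_refl e2 (seqT g (castT eq_refl (eq_sym e1) f)).
Proof. destruct e1, e2. reflexivity. Qed.

Lemma seq_castr {A A' B C : Sys T} (e : A = A') (g : TR B C) (f : TR A B) :
  seqT g (castT e eq_refl f) = castT e eq_refl (seqT g f).
Proof. destruct e. reflexivity. Qed.

Lemma seq_cast_mid {A B B' C C' : Sys T} (e e' : B = B') (e2 : C = C') (h : TR B C) (u : TR A B) :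
  seqT (castT e e2 h) (castT eq_refl e' u) = castT eq_refl e2 (seqT h u).
Proof. rewrite (proof_irrelevance _ e e'). destruct e', e2. reflexivity. Qed.

Lemma seq_cast_out {A B C C' : Sys T} (e1 : B = B) (e2 : C = C') (h : TR B C) (u : TR A B) :
  seqT (castT e1 e2 h) u = castT eq_refl e2 (seqT h u).
Proof. rewrite (proof_irrelevance _ e1 eq_refl). destruct e2. reflexivity. Qed.

Lemma cast_seq_loop {X Y Z : Sys T} (e : X = Y) (h : TR X X) (u : TR Z Y) :
  castT eq_refl e (seqT (castT e eq_refl h) u) = seqT (castT e e h) u.
Proof. destruct e. reflexivity. Qed.

Lemma cast_id {A A' : Sys T} (e1 e2 : A = A') : castT e1 e2 (idT A) = idT A'.
Proof. destruct e1. rewrite (proof_irrelevance _ e2 eq_refl). reflexivity. Qed.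

Lemma cast_add {A A' B B' : Sys T} (e1 : A = A') (e2 : B = B') (f g : TR A B) :
  castT e1 e2 (addT f g) = addT (castT e1 e2 f) (castT e1 e2 g).
Proof. destruct e1, e2. reflexivity. Qed.

Lemma cast_scale {A A' B B' : Sys T} (e1 : A = A') (e2 : B = B') r (f : TR A B) :
  castT e1 e2 (scaleT r f) = scaleT r (castT e1 e2 f).
Proof. destruct e1, e2. reflexivity. Qed.

Lemma cast_zero {A A' B B' : Sys T} (e1 : A = A') (e2 : B = B') :
  castT e1 e2 (@zeroT T A B) = zeroT.
Proof. destruct e1, e2. reflexivity. Qed.

Lemma cast_parl {A A' B B' C D : Sys T} (e1 : A = A') (e2 : B = B') e3 e4 (f : TR A B) (g : TR C D) :
  parT (castT e1 e2 f) g = castT e3 e4 (parT f g).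
Proof. destruct e1, e2. symmetry. apply cast_loop. Qed.

Lemma cast_parr {A A' B B' C D : Sys T} (e1 : A = A') (e2 : B = B') e3 e4 (f : TR A B) (g : TR C D) :
  parT g (castT e1 e2 f) = castT e3 e4 (parT g f).
Proof. destruct e1, e2. symmetry. apply cast_loop. Qed.

Lemma phys_cast {A A' B B' : Sys T} (e1 : A = A') (e2 : B = B') (f : TR A B) :
  phys f -> phys (castT e1 e2 f).
Proof. destruct e1, e2. auto. Qed.

Lemma refines_cast {A A' B B' : Sys T} (e1 : A = A') (e2 : B = B') (D C : TR A B) :
  refines D C -> refines (castT e1 e2 D) (castT e1 e2 C).
Proof. destruct e1, e2. auto. Qed.

Lemma pure_cast {A A' : Sys T} (e : A = A') (X : TR sysI A) :
  pure_state X -> pure_state (castT eq_refl e X).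
Proof. destruct e. auto. Qed.

End Transport.

Section Operational.
Context {T : OPTData} (HT : OPTAxioms T) (eff : forall A : Sys T, TR A sysI)
  (Hcaus : causal eff).
Notation I := (@sysI T).
Notation pr a v := (prob (seqT a v)).
Notation eop := effect_on_pair.

Lemma seq_zero_r {A B C : Sys T} (g : TR B C) : seqT g (@zeroT T A B) = zeroT.
Proof. rewrite <- (scale_zero HT _ _ zeroT), (seq_scaler HT), (scale_zero HT). reflexivity. Qed.

Lemma seq_zero_l {A B C : Sys T} (f : TR A B) : seqT (@zeroT T B C) f = zeroT.
Proof. rewrite <- (scale_zero HT _ _ zeroT), (seq_scalel HT), (scale_zero HT). reflexivity. Qed.

Lemma par_zero_r {A B C D : Sys T} (f : TR A B) : parT f (@zeroT T C D) = zeroT.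
Proof. rewrite <- (scale_zero HT _ _ zeroT), (par_scaler HT), (scale_zero HT). reflexivity. Qed.

Lemma par_zero_l {A B C D : Sys T} (f : TR A B) : parT (@zeroT T C D) f = zeroT.
Proof. rewrite <- (scale_zero HT _ _ zeroT), (par_scalel HT), (scale_zero HT). reflexivity. Qed.

Lemma add_zero_l {A B : Sys T} (f : TR A B) : addT zeroT f = f.
Proof. rewrite (add_comm HT), (add_zero HT). reflexivity. Qed.

Lemma sumT_app {A B : Sys T} (l1 l2 : list (TR A B)) :
  sumT (l1 ++ l2) = addT (sumT l1) (sumT l2).
Proof.
  induction l1 as [|f l1 IH]; simpl; [rewrite add_zero_l; auto|].
  rewrite IH, (add_assoc HT). auto.
Qed.

Lemma sumT_perm {A B : Sys T} (l l' : list (TR A B)) : Permutation l l' -> sumT l = sumT l'.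
Proof.
  induction 1; simpl; auto.
  - rewrite IHPermutation. auto.
  - rewrite !(add_assoc HT), (add_comm HT _ _ y x). auto.
  - congruence.
Qed.

Lemma seq_sumT_l {A B C : Sys T} (l : list (TR B C)) (f : TR A B) :
  seqT (sumT l) f = sumT (map (fun g => seqT g f) l).
Proof. induction l; simpl; [apply seq_zero_l|]. rewrite (seq_addl HT), IHl. auto. Qed.

Lemma par_sumT_l {A B C D : Sys T} (l : list (TR A B)) (g : TR C D) :
  parT (sumT l) g = sumT (map (fun f => parT f g) l).
Proof. induction l; simpl; [apply par_zero_l|]. rewrite (par_addl HT), IHl. auto. Qed.

Lemma par_sumT_r {A B C D : Sys T} (g : TR A B) (l : list (TR C D)) :
  parT g (sumT l) = sumT (map (fun f => parT g f) l).
Proof. induction l; simpl; [apply par_zero_r|]. rewrite (par_addr HT), IHl. auto. Qed.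

Lemma pr_scale {A : Sys T} (a : TR A I) c v : pr a (scaleT c v) = c * pr a v.
Proof. rewrite (seq_scaler HT), (prob_scale HT). auto. Qed.

Lemma prob_zero : prob (@zeroT T I I) = 0.
Proof. rewrite <- (scale_zero HT _ _ (idT I)), (prob_scale HT). ring. Qed.

Lemma pr_zero {A : Sys T} (a : TR A I) : pr a zeroT = 0.
Proof. rewrite seq_zero_r. apply prob_zero. Qed.

Lemma scalar_id (p : TR I I) : p = scaleT (prob p) (idT I).
Proof. apply (prob_inj HT). rewrite (prob_scale HT), (prob_id HT). ring. Qed.

Lemma phys_of_test {A B : Sys T} (l : list (TR A B)) f : isTest l -> In f l -> phys f.
Proof. intros H. apply Forall_forall, (test_phys HT _ _ _ H). Qed.

Lemma phys_seq {A B C : Sys T} (g : TR B C) (f : TR A B) : phys g -> phys f -> phys (seqT g f).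
Proof.
  intros Hg Hf. destruct (phys_test HT _ _ g Hg) as [m [Hm Im]].
  destruct (phys_test HT _ _ f Hf) as [l [Hl Il]].
  apply (phys_of_test _ _ (test_seq HT _ _ _ l m Hl Hm)).
  apply in_flat_map. exists f. split; auto. apply in_map_iff. eauto.
Qed.

Lemma phys_par {A B C D : Sys T} (f : TR A B) (g : TR C D) : phys f -> phys g -> phys (parT f g).
Proof.
  intros Hf Hg. destruct (phys_test HT _ _ g Hg) as [m [Hm Im]].
  destruct (phys_test HT _ _ f Hf) as [l [Hl Il]].
  apply (phys_of_test _ _ (test_par HT _ _ _ _ l m Hl Hm)).
  apply in_flat_map. exists f. split; auto. apply in_map_iff. eauto.
Qed.

Lemma phys_id (A : Sys T) : phys (idT A).
Proof. apply (phys_of_test _ _ (test_id HT A)). left; auto. Qed.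

Lemma phys_scale {A B : Sys T} c (f : TR A B) : 0 <= c <= 1 -> phys f -> phys (scaleT c f).
Proof.
  intros Hc Hf. destruct (prob_surj HT c) as [p Hp].
  assert (Hpp : phys p) by (apply (phys_prob HT); lra).
  rewrite <- Hp, <- (scalar_action HT). apply phys_cast, phys_par; auto.
Qed.

Lemma test_front {A B : Sys T} (m : list (TR A B)) f :
  isTest m -> In f m -> exists m', isTest (f :: m').
Proof.
  intros H Hi. destruct (in_split _ _ Hi) as [ma [mb ->]]. exists (ma ++ mb).
  refine (test_perm HT _ _ _ H). apply Permutation_sym, Permutation_middle.
Qed.

Lemma state_eq {A : Sys T} (v w : TR I A) :
  (forall a, phys a -> pr a v = pr a w) -> v = w.
Proof. intros H. apply (state_sep HT). intros a Ha. apply (prob_inj HT). auto. Qed.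

Lemma det_eff {A : Sys T} (e : TR A I) : isTest [e] -> e = eff A.
Proof. apply (proj1 Hcaus). Qed.

Lemma eff_test (A : Sys T) : isTest [eff A].
Proof. apply (proj1 Hcaus). reflexivity. Qed.

Lemma phys_eff (A : Sys T) : phys (eff A).
Proof. apply (phys_of_test _ _ (eff_test A)). left; auto. Qed.

Lemma eff_pair (A B : Sys T) : eff (sysC A B) = eop (eff A) (eff B).
Proof. apply (proj2 Hcaus). Qed.

Lemma sum_test_eff {A : Sys T} (l : list (TR A I)) : isTest l -> l <> [] -> sumT l = eff A.
Proof.
  intros H Hn. apply det_eff. rewrite <- (app_nil_r l) in H.
  exact (test_coarse HT _ _ [] H Hn).
Qed.

Lemma phys_zero_eff (A : Sys T) : phys (@zeroT T A I).
Proof. rewrite <- (scale_zero HT _ _ (eff A)). apply phys_scale; [lra|apply phys_eff]. Qed.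


Definition cond {A C : Sys T} (b : TR C I) (X : TR I (sysC A C)) : TR I A :=
  castT eq_refl (sysC_unitr A) (seqT (parT (idT A) b) X).

Lemma marginal_cond {A C : Sys T} (X : TR I (sysC A C)) : marginal eff X = cond (eff C) X.
Proof. reflexivity. Qed.

Definition condL {A B : Sys T} (a : TR A I) (X : TR I (sysC A B)) : TR I B :=
  castT eq_refl (sysC_unitl B) (seqT (parT a (idT B)) X).

Definition appS {A B : Sys T} (w : TR I B) : TR A (sysC A B) :=
  castT (sysC_unitr A) eq_refl (parT (idT A) w).

Definition sp {A B : Sys T} (u : TR I A) (w : TR I B) : TR I (sysC A B) :=
  seqT (appS w) u.

Lemma eop_seq {A B C D : Sys T} (a : TR B I) (b : TR D I) (f : TR A B) (g : TR C D) :
  seqT (eop a b) (parT f g) = eop (seqT a f) (seqT b g).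
Proof. unfold effect_on_pair. rewrite seq_castl. simpl. rewrite (par_seq HT). reflexivity. Qed.

Lemma pr_cond {A C : Sys T} (a : TR A I) (b : TR C I) (X : TR I (sysC A C)) :
  pr a (cond b X) = pr (eop a b) X.
Proof.
  f_equal. unfold cond, effect_on_pair.
  transitivity (seqT (castT (sysC_unitr A) (sysC_unitr I) (parT a (idT I)))
                     (castT eq_refl (sysC_unitr A) (seqT (parT (idT A) b) X))).
  { rewrite (par_unitr HT). reflexivity. }
  rewrite <- cast_seq, seq_castl. simpl. f_equal.
  rewrite (seq_assoc HT), <- (par_seq HT), (seq_idl HT), (seq_idr HT). reflexivity.
Qed.

Lemma pr_condL {A B : Sys T} (a : TR A I) (b : TR B I) (X : TR I (sysC A B)) :
  pr b (condL a X) = pr (eop a b) X.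
Proof.
  f_equal. unfold condL, effect_on_pair.
  transitivity (seqT (castT (sysC_unitl B) (sysC_unitl I) (parT (idT I) b))
                     (castT eq_refl (sysC_unitl B) (seqT (parT a (idT B)) X))).
  { rewrite (par_unitl HT). reflexivity. }
  rewrite <- cast_seq, seq_castl. simpl.
  rewrite (seq_assoc HT), <- (par_seq HT), (seq_idl HT), (seq_idr HT). apply cast_irr.
Qed.

Lemma pr_eff_pair {A B : Sys T} (X : TR I (sysC A B)) :
  pr (eff (sysC A B)) X = pr (eff A) (cond (eff B) X).
Proof. rewrite eff_pair, pr_cond. auto. Qed.

Lemma cond_seq_par {A B C : Sys T} (f : TR A B) (b : TR C I) (X : TR I (sysC A C)) :
  cond b (seqT (parT f (idT C)) X) = seqT f (cond b X).
Proof.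
  unfold cond.
  transitivity (seqT (castT (sysC_unitr A) (sysC_unitr B) (parT f (idT I)))
                     (castT eq_refl (sysC_unitr A) (seqT (parT (idT A) b) X))).
  2:{ rewrite (par_unitr HT). reflexivity. }
  rewrite <- cast_seq. f_equal.
  rewrite !(seq_assoc HT), <- !(par_seq HT), !(seq_idl HT), !(seq_idr HT). reflexivity.
Qed.

Lemma cond_seq_id {A C D : Sys T} (R : TR C D) (b : TR D I) (X : TR I (sysC A C)) :
  cond b (seqT (parT (idT A) R) X) = cond (seqT b R) X.
Proof. unfold cond. f_equal. rewrite (seq_assoc HT), <- (par_seq HT), (seq_idl HT). reflexivity. Qed.

Lemma cond_add {A C : Sys T} (b b' : TR C I) (X : TR I (sysC A C)) :
  cond (addT b b') X = addT (cond b X) (cond b' X).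
Proof. unfold cond. rewrite (par_addr HT), (seq_addl HT), cast_add. auto. Qed.

Lemma cond_scale {A C : Sys T} r (b : TR C I) (X : TR I (sysC A C)) :
  cond (scaleT r b) X = scaleT r (cond b X).
Proof. unfold cond. rewrite (par_scaler HT), (seq_scalel HT), cast_scale. auto. Qed.

Lemma cond_zero {A C : Sys T} (X : TR I (sysC A C)) : cond zeroT X = zeroT.
Proof. unfold cond. rewrite par_zero_r, seq_zero_l, cast_zero. auto. Qed.

Lemma cond_add_state {A C : Sys T} (b : TR C I) (X Y : TR I (sysC A C)) :
  cond b (addT X Y) = addT (cond b X) (cond b Y).
Proof. unfold cond. rewrite (seq_addr HT), cast_add. auto. Qed.

Lemma cond_span {A C : Sys T} (X : TR I (sysC A C)) (v : TR I A) :
  inSpan (fun d => exists b, d = cond b X) v -> exists b, v = cond b X.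
Proof.
  intros [l [Hl ->]]. induction l as [|[r d] l IH]; simpl.
  - exists zeroT. rewrite cond_zero. auto.
  - inversion Hl as [|? ? [b Hb] Hl']; subst. destruct (IH Hl') as [b' Hb'].
    exists (addT (scaleT r b) b'). rewrite cond_add, cond_scale, <- Hb, <- Hb'. auto.
Qed.

Lemma phys_cond {A C : Sys T} (b : TR C I) (X : TR I (sysC A C)) :
  phys b -> phys X -> phys (cond b X).
Proof. intros. apply phys_cast, phys_seq; auto. apply phys_par; auto. apply phys_id. Qed.

Lemma marginal_normalized {A C : Sys T} (X : TR I (sysC A C)) :
  normalized eff X -> normalized eff (marginal eff X).
Proof.
  intros [PX NX]. split; [apply phys_cond; auto; apply phys_eff|].
  rewrite <- NX, pr_eff_pair. auto.
Qed.

Lemma normalized_of_marginal {A C : Sys T} (X : TR I (sysC A C)) :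
  phys X -> pr (eff A) (marginal eff X) = 1 -> normalized eff X.
Proof. intros PX N. split; auto. rewrite pr_eff_pair. exact N. Qed.

Lemma eop_app {A B : Sys T} (a : TR A I) (b : TR B I) (w : TR I B) :
  seqT (eop a b) (appS (A:=A) w) = scaleT (pr b w) a.
Proof.
  unfold effect_on_pair, appS.
  transitivity (castT (sysC_unitr A) (sysC_unitr I) (seqT (parT a b) (parT (idT A) w))).
  { rewrite cast_seq with (e2 := eq_refl). reflexivity. }
  rewrite <- (par_seq HT), (seq_idr HT), (scalar_id (seqT b w)), (par_scaler HT), cast_scale,
    (par_unitr HT).
  f_equal. rewrite (prob_scale HT), (prob_id HT). ring.
Qed.

Lemma cond_sp {A B : Sys T} (b : TR B I) (u : TR I A) (w : TR I B) :
  cond b (sp u w) = scaleT (pr b w) u.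
Proof.
  unfold cond, sp, appS. rewrite (seq_assoc HT), seq_castr, cast_seq_loop.
  rewrite <- (par_seq HT), (seq_idl HT), (scalar_id (seqT b w)), (par_scaler HT), (par_id HT),
    cast_scale, cast_id, (seq_scalel HT), (seq_idl HT).
  f_equal. rewrite (prob_scale HT), (prob_id HT). ring.
Qed.

Lemma condL_sp {A B : Sys T} (a : TR A I) (u : TR I A) (w : TR I B) :
  condL a (sp u w) = scaleT (pr a u) w.
Proof. apply state_eq. intros b _. rewrite pr_condL, <- pr_cond, cond_sp, !pr_scale. ring. Qed.

Lemma pr_eop_sp {A B : Sys T} (a : TR A I) (b : TR B I) (u : TR I A) (w : TR I B) :
  pr (eop a b) (sp u w) = pr a u * pr b w.
Proof. rewrite <- pr_cond, cond_sp, pr_scale. ring. Qed.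

Lemma phys_app {A B : Sys T} (w : TR I B) : phys w -> phys (appS (A:=A) w).
Proof. intros. apply phys_cast, phys_par; auto. apply phys_id. Qed.

Lemma phys_sp {A B : Sys T} (u : TR I A) (w : TR I B) : phys u -> phys w -> phys (sp u w).
Proof. intros. apply phys_seq; auto. apply phys_app; auto. Qed.

Lemma sumT_flat {A B C : Sys T} (m : list (TR B C)) (l : list (TR A B)) :
  sumT (flat_map (fun x => map (fun g => seqT g x) m) l) = seqT (sumT m) (sumT l).
Proof.
  induction l; simpl; [rewrite seq_zero_r; auto|].
  rewrite sumT_app, IHl, (seq_addr HT), !seq_sumT_l. auto.
Qed.

Lemma refines_seq {A B C : Sys T} (D X : TR A B) (m : list (TR B C)) f :
  refines D X -> isTest m -> In f m -> refines (seqT f D) (seqT (sumT m) X).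
Proof.
  intros [l1 [l2 [Ht [HX Hin]]]] Hm Hf.
  exists (flat_map (fun x => map (fun g => seqT g x) m) l1),
         (flat_map (fun x => map (fun g => seqT g x) m) l2).
  split; [|split].
  - rewrite <- flat_map_app. apply (test_seq HT); auto.
  - rewrite sumT_flat, HX. auto.
  - apply in_flat_map. exists D. split; auto. apply in_map_iff. eauto.
Qed.

Lemma refines_phys {A B : Sys T} (D X : TR A B) : refines D X -> phys D.
Proof. intros [l1 [l2 [H [_ Hin]]]]. apply (phys_of_test _ _ H), in_or_app; auto. Qed.

Lemma refines_self {A B : Sys T} (X : TR A B) : phys X -> refines X X.
Proof.
  intros H. destruct (phys_test HT _ _ X H) as [m [Hm Im]].
  destruct (test_front _ _ Hm Im) as [m' Hm'].
  exists [X], m'. simpl. rewrite (add_zero HT). auto.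
Qed.

Lemma refines_cond {A C : Sys T} (D X : TR I (sysC A C)) b :
  refines D X -> phys b -> refines (cond b D) (marginal eff X).
Proof.
  intros HD Hb. destruct (phys_test HT _ _ b Hb) as [m [Hm Im]].
  assert (Hs : sumT m = eff C) by (apply sum_test_eff; auto; intros ->; destruct Im).
  unfold marginal. apply refines_cast. rewrite <- Hs, par_sumT_r.
  apply refines_seq; auto.
  - pose proof (test_par HT _ _ _ _ [idT A] m (test_id HT A) Hm) as H. simpl in H.
    rewrite app_nil_r in H. exact H.
  - apply in_map_iff; eauto.
Qed.

Lemma refines_condL {A B : Sys T} (D X : TR I (sysC A B)) a :
  refines D X -> phys a -> refines (condL a D) (condL (eff A) X).
Proof.
  intros HD Ha. destruct (phys_test HT _ _ a Ha) as [m [Hm Im]].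
  assert (Hs : sumT m = eff A) by (apply sum_test_eff; auto; intros ->; destruct Im).
  unfold condL. apply refines_cast. rewrite <- Hs, par_sumT_l.
  apply refines_seq; auto.
  - exact (test_par HT _ _ _ _ m [idT B] Hm (test_id HT B)).
  - apply in_map_iff; eauto.
Qed.

Hypothesis Hld : local_discriminability T.

Lemma pure_sp {A B : Sys T} (u : TR I A) (w : TR I B) :
  pure_state u -> pure_state w -> pr (eff A) u = 1 -> pr (eff B) w = 1 -> pure_state (sp u w).
Proof.
  intros [Pu Au] [Pw Aw] Nu Nw. split; [apply phys_sp; auto|].
  intros D HD.
  (* conditioning [D] on either side yields multiples of the factors *)
  assert (Hb : forall b, phys b -> exists l, cond b D = scaleT l u).
  { intros b Hb. destruct (Au (cond b D)) as [l [_ Hl]]; eauto.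
    pose proof (refines_cond _ _ b HD Hb) as H.
    rewrite marginal_cond, cond_sp, Nw, (scale_one HT) in H. exact H. }
  assert (Ha : forall a, phys a -> exists l, 0 <= l <= 1 /\ condL a D = scaleT l w).
  { intros a Ha. apply Aw.
    pose proof (refines_condL _ _ a HD Ha) as H. rewrite condL_sp, Nu, (scale_one HT) in H. auto. }
  destruct (Ha (eff A) (phys_eff A)) as [c [Hc Hce]].
  exists c. split; auto.
  (* [D] and [c (u (x) w)] agree on product effects, hence coincide *)
  apply NNPP. intro Hne.
  destruct (Hld _ _ D (scaleT c (sp u w)) (refines_phys _ _ HD)
              (phys_scale _ _ Hc (phys_sp _ _ Pu Pw)) Hne) as [a [b [Pa [Pb Hab]]]].
  apply Hab. clear Hab.
  destruct (Hb b Pb) as [lb Hlb].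
  assert (E1 : pr (eop (eff A) b) D = c * pr b w) by (rewrite <- pr_condL, Hce, pr_scale; auto).
  assert (E2 : pr (eop (eff A) b) D = lb) by (rewrite <- pr_cond, Hlb, pr_scale, Nu; ring).
  rewrite pr_scale, pr_eop_sp, <- pr_cond, Hlb, pr_scale, <- E2, E1. ring.
Qed.

Definition inverse_tests {Z Z' : Sys T} (R : TR Z Z') (Ri : TR Z' Z) : Prop :=
  isTest [R] /\ isTest [Ri] /\ seqT Ri R = idT Z /\ seqT R Ri = idT Z'.

Lemma inverse_tests_seq {X Y Z : Sys T} (R : TR X Y) (Ri : TR Y X) (S : TR Y Z) (Si : TR Z Y) :
  inverse_tests R Ri -> inverse_tests S Si -> inverse_tests (seqT S R) (seqT Ri Si).
Proof.
  intros [HR [HRi [E1 E2]]] [HS [HSi [F1 F2]]]. split; [|split; [|split]].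
  - exact (test_seq HT _ _ _ _ _ HR HS).
  - exact (test_seq HT _ _ _ _ _ HSi HRi).
  - rewrite (seq_assoc HT), <- (seq_assoc HT _ _ _ _ Ri), F1, (seq_idr HT). exact E1.
  - rewrite (seq_assoc HT), <- (seq_assoc HT _ _ _ _ S), E2, (seq_idr HT). exact F2.
Qed.

Lemma inverse_tests_swap (X Y : Sys T) : inverse_tests (swapT X Y) (swapT Y X).
Proof. repeat split; try apply (test_swap HT); apply (swap_inv HT). Qed.

Lemma inverse_tests_par_id {X Y : Sys T} (R : TR X Y) (Ri : TR Y X) (Z : Sys T) :
  inverse_tests R Ri -> inverse_tests (parT R (idT Z)) (parT Ri (idT Z)).
Proof.
  intros [HR [HRi [E1 E2]]]. split; [|split; [|split]].
  - exact (test_par HT _ _ _ _ _ _ HR (test_id HT Z)).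
  - exact (test_par HT _ _ _ _ _ _ HRi (test_id HT Z)).
  - rewrite <- (par_seq HT), E1, (seq_idl HT), (par_id HT). auto.
  - rewrite <- (par_seq HT), E2, (seq_idl HT), (par_id HT). auto.
Qed.

Lemma inverse_tests_cast {X X' : Sys T} (e : X = X') :
  inverse_tests (castT eq_refl e (idT X)) (castT e eq_refl (idT X)).
Proof. destruct e. repeat split; try apply (test_id HT); apply (seq_idl HT). Qed.

Lemma reorder_inverse_tests (Y A C : Sys T) :
  exists (R : TR (sysC Y (sysC A C)) (sysC C (sysC A Y))) Ri, inverse_tests R Ri.
Proof.
  pose proof (inverse_tests_seq _ _ _ _ (inverse_tests_swap Y (sysC A C))
                (inverse_tests_par_id _ _ Y (inverse_tests_swap A C))) as H1.
  pose proof (inverse_tests_seq _ _ _ _ H1 (inverse_tests_cast (sysC_assoc C A Y))) as H2.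
  eauto.
Qed.

Lemma pure_local_reversible {A Z Z' : Sys T} (R : TR Z Z') (Ri : TR Z' Z) (X : TR I (sysC A Z)) :
  inverse_tests R Ri -> pure_state X -> pure_state (seqT (parT (idT A) R) X).
Proof.
  intros [HR [HRi [Hinv Hinv2]]] [PX AX]. split.
  - apply phys_seq; auto. apply phys_par; [apply phys_id|]. apply (phys_of_test _ _ HR). left; auto.
  - intros D HD.
    assert (HRiD : refines (seqT (parT (idT A) Ri) D) X).
    { pose proof (refines_seq _ _ [parT (idT A) Ri] (parT (idT A) Ri) HD) as H. simpl in H.
      rewrite (add_zero HT), (seq_assoc HT), <- (par_seq HT), (seq_idl HT), Hinv, (par_id HT),
        (seq_idl HT) in H.
      apply H; [exact (test_par HT _ _ _ _ _ _ (test_id HT A) HRi)|left; auto]. }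
    destruct (AX _ HRiD) as [l [Hl HDl]].
    exists l. split; auto.
    transitivity (seqT (parT (idT A) R) (seqT (parT (idT A) Ri) D)).
    + rewrite (seq_assoc HT), <- (par_seq HT), (seq_idl HT), Hinv2, (par_id HT), (seq_idl HT). auto.
    + rewrite HDl, (seq_scaler HT). auto.
Qed.

Lemma app_assoc_sp {A C B : Sys T} (X : TR I (sysC A C)) (w : TR I B) :
  seqT (parT (idT A) (appS (A:=C) w)) X = castT eq_refl (sysC_assoc A C B) (sp X w).
Proof.
  unfold sp, appS. rewrite <- (seq_cast_out eq_refl). f_equal.
  rewrite (cast_parr (sysC_unitr C) eq_refl (f_equal (sysC A) (sysC_unitr C)) eq_refl).
  rewrite <- (par_assoc HT), (par_id HT), !cast_trans. apply cast_irr.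
Qed.

Lemma purification_append {A C Y : Sys T} (om : TR I A) (P : TR I (sysC A C)) (Phi : TR I Y) :
  purification eff om P -> normalized eff Phi -> pure_state Phi ->
  purification eff om (seqT (parT (idT A) (appS (A:=C) Phi)) P).
Proof.
  intros [[PP NP] [PurP MP]] [PPhi NPhi] PurPhi.
  assert (Hm : marginal eff (seqT (parT (idT A) (appS (A:=C) Phi)) P) = om).
  { rewrite <- MP, !marginal_cond, cond_seq_id, eff_pair, eop_app, NPhi, (scale_one HT).
    reflexivity. }
  split; [|split; [|exact Hm]].
  - apply normalized_of_marginal.
    + apply phys_seq; auto. apply phys_par; [apply phys_id|apply phys_app; auto].
    + rewrite Hm, <- MP, marginal_cond, <- pr_eff_pair. exact NP.
  - rewrite app_assoc_sp. apply pure_cast, pure_sp; auto.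
Qed.

Lemma purification_local_reversible {A Z Z' : Sys T} (om : TR I A) (R : TR Z Z') (Ri : TR Z' Z)
  (X : TR I (sysC A Z)) :
  inverse_tests R Ri -> purification eff om X -> purification eff om (seqT (parT (idT A) R) X).
Proof.
  intros HRR [[PX NX] [PurX MX]].
  assert (HeR : seqT (eff Z') R = eff Z).
  { destruct HRR as [HR _]. apply det_eff, (test_seq HT _ _ _ _ _ HR (eff_test Z')). }
  assert (Hm : marginal eff (seqT (parT (idT A) R) X) = om).
  { rewrite <- MX, !marginal_cond, cond_seq_id, HeR. reflexivity. }
  split; [|split; [|exact Hm]].
  - apply normalized_of_marginal.
    + apply phys_seq; auto. apply phys_par; [apply phys_id|].
      destruct HRR as [HR _]. apply (phys_of_test _ _ HR). left; auto.
    + rewrite Hm, <- MX, marginal_cond, <- pr_eff_pair. exact NX.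
  - apply (pure_local_reversible R Ri); auto.
Qed.

Lemma eop_assoc {A E F : Sys T} (a : TR A I) (b : TR E I) (c : TR F I)
  (X : TR I (sysC (sysC A E) F)) :
  seqT (eop a (eop b c)) (castT eq_refl (sysC_assoc A E F) X) = seqT (eop (eop a b) c) X.
Proof.
  unfold effect_on_pair.
  rewrite (cast_parr eq_refl (sysC_unitr I) eq_refl (f_equal (sysC I) (sysC_unitr I))).
  rewrite (cast_parl eq_refl (sysC_unitr I) eq_refl (f_equal (fun Z => sysC Z I) (sysC_unitr I))).
  rewrite <- (par_assoc HT), !cast_trans, seq_cast_mid, seq_cast_out. apply cast_irr.
Qed.

Lemma cond_reassoc {A E F : Sys T} (b : TR E I) (c : TR F I) (X : TR I (sysC (sysC A E) F)) :
  cond (eop b c) (castT eq_refl (sysC_assoc A E F) X) = cond b (cond c X).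
Proof.
  apply state_eq. intros a _. rewrite pr_cond, eop_assoc, <- pr_cond, <- pr_cond. reflexivity.
Qed.

Lemma refinement_split {A B : Sys T} (d X : TR A B) :
  refines d X -> X = d \/ exists s l, isTest (d :: s :: l) /\ X = addT d s.
Proof.
  intros [l1 [l2 [Ht [HX Hin]]]].
  destruct (in_split _ _ Hin) as [la [lb ->]].
  assert (HX' : X = addT d (sumT (la ++ lb))).
  { rewrite HX. change (addT d (sumT (la ++ lb))) with (sumT (d :: la ++ lb)).
    apply sumT_perm, Permutation_sym, Permutation_middle. }
  destruct (classic (la ++ lb = [])) as [Hnil|Hnn].
  - left. rewrite HX', Hnil. apply (add_zero HT).
  - right. exists (sumT (la ++ lb)), l2. split; auto.
    assert (H1 : isTest ((la ++ lb) ++ d :: l2)).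
    { refine (test_perm HT _ _ _ Ht). rewrite <- !app_assoc. apply Permutation_app_head.
      simpl. apply Permutation_middle. }
    refine (test_perm HT _ _ _ (test_coarse HT _ _ _ H1 Hnn)). apply perm_swap.
Qed.

(* If [d] and [s] are outcomes of a common test, the correlated state
   [d (x) r0 + s (x) r1] is physical: it is a coarse-graining of the test
   that appends [r0] after outcome [d] and [r1] after outcome [s]. *)
Lemma mixture_phys {A E : Sys T} (d s : TR I A) (l : list (TR I A)) (r0 r1 : TR I E) :
  isTest (d :: s :: l) -> phys r0 -> phys r1 -> phys (addT (sp d r0) (sp s r1)).
Proof.
  intros Ht P0 P1.
  destruct (phys_test HT _ _ _ (phys_app (A:=A) r0 P0)) as [m0 [Hm0 Im0]].
  destruct (test_front _ _ Hm0 Im0) as [m0' H0].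
  destruct (phys_test HT _ _ _ (phys_app (A:=A) r1 P1)) as [m1 [Hm1 Im1]].
  destruct (test_front _ _ Hm1 Im1) as [m1' H1].
  set (k := fun i : nat => match i with 1%nat => appS r1 :: m1' | _ => appS (A:=A) r0 :: m0' end).
  assert (Hk : forall i, (i < length (d :: s :: l))%nat -> isTest (k i)).
  { intros [|[|i]] _; simpl; auto. }
  pose proof (test_cond HT _ _ _ _ k Ht Hk) as Hc. simpl in Hc.
  set (L := flat_map _ _) in Hc.
  assert (Hp : isTest ([seqT (appS r0) d; seqT (appS r1) s] ++
     (map (fun g => seqT g d) m0' ++ map (fun g => seqT g s) m1' ++ L))).
  { refine (test_perm HT _ _ _ Hc). simpl. apply perm_skip.
    apply Permutation_sym, Permutation_middle. }
  pose proof (test_coarse HT _ _ _ Hp ltac:(discriminate)) as Hq.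
  apply (phys_of_test _ _ Hq). simpl. rewrite (add_zero HT). left; reflexivity.
Qed.

Hypothesis Hpd : perfectly_distinguishable_exist eff.
Hypothesis Hpur : purification_postulate eff.

Lemma steering_witness {A : Sys T} (d s : TR I A) (l : list (TR I A)) :
  isTest (d :: s :: l) -> pr (eff A) (addT d s) = 1 ->
  exists Y (Phi : TR I (sysC A Y)) (b : TR Y I),
    normalized eff Phi /\ pure_state Phi /\ marginal eff Phi = addT d s /\ cond b Phi = d.
Proof.
  intros Ht Nom.
  destruct Hpd as [E [r0 [r1 [a0 [a1 [[P0 N0] [[P1 N1] [_ [H00 [_ [H01 _]]]]]]]]]]].
  (* [Phi] is a reassociated purification of [d (x) r0 + s (x) r1], and
     [a0] singles out [d] *)
  set (Sg := addT (sp d r0) (sp s r1)).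
  assert (MSg : marginal eff Sg = addT d s).
  { unfold Sg. rewrite marginal_cond, cond_add_state, !cond_sp, N0, N1, !(scale_one HT). auto. }
  assert (CSg : cond a0 Sg = d).
  { unfold Sg. rewrite cond_add_state, !cond_sp, H00, H01, (scale_zero HT), (scale_one HT), (add_zero HT).
    auto. }
  assert (NSg : normalized eff Sg).
  { apply normalized_of_marginal; [apply (mixture_phys d s l); auto|rewrite MSg; auto]. }
  destruct (proj1 Hpur _ Sg NSg) as [F [Phi0 [[PPhi0 _] [PurPhi0 MPhi0]]]].
  set (Phi := castT eq_refl (sysC_assoc A E F) Phi0).
  assert (MPhi : marginal eff Phi = addT d s).
  { unfold Phi. rewrite marginal_cond, eff_pair, cond_reassoc, <- (marginal_cond Phi0), MPhi0. auto. }
  exists (sysC E F), Phi, (eop a0 (eff F)). split; [|split; [|split]]; auto.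
  - apply normalized_of_marginal; [apply phys_cast; auto|rewrite MPhi; auto].
  - apply pure_cast; auto.
  - unfold Phi. rewrite cond_reassoc, <- (marginal_cond Phi0), MPhi0. exact CSg.
Qed.

(* Two pure states with the same marginal steer the same conditional states:
   by uniqueness of purification, [P (x) Phi] and a reordering of
   [Phi (x) P] differ by a reversible channel on the purifying system. *)
Lemma purifications_steer {A C Y : Sys T} (P : TR I (sysC A C)) (Phi : TR I (sysC A Y)) :
  normalized eff P -> pure_state P -> normalized eff Phi -> pure_state Phi ->
  marginal eff Phi = marginal eff P ->
  forall b : TR Y I, exists c : TR C I, cond b Phi = cond c P.
Proof.
  intros NP PurP NPhi PurPhi HM b.
  set (om := marginal eff P).
  destruct (reorder_inverse_tests Y A C) as [R [Ri HRR]].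
  set (X1 := seqT (parT (idT A) (appS (A:=C) Phi)) P).
  set (X2 := seqT (parT (idT A) R) (seqT (parT (idT A) (appS (A:=Y) P)) Phi)).
  assert (Pur1 : purification eff om X1).
  { apply purification_append; auto. split; [exact NP|split; [exact PurP|reflexivity]]. }
  assert (Pur2 : purification eff om X2).
  { apply (purification_local_reversible om R Ri); auto.
    apply purification_append; auto. split; [exact NPhi|split; [exact PurPhi|exact HM]]. }
  destruct (proj2 Hpur A _ om X1 X2 (marginal_normalized P NP) Pur1 Pur2) as [U [_ HX2]].
  (* [cond b Phi] is read off [X2] with the effect [(b (x) e) . Ri], hence
     off [X1] (as [X2 = (I (x) U) X1]) and finally off [P] *)
  exists (seqT (seqT (seqT (eop b (eff (sysC A C))) Ri) U) (appS (A:=C) Phi)).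
  rewrite <- cond_seq_id. fold X1. rewrite <- cond_seq_id, <- HX2.
  destruct HRR as [_ [_ [Hinv _]]].
  unfold X2. rewrite !cond_seq_id, <- (seq_assoc HT _ _ _ _ _ Ri R), Hinv, (seq_idr HT), eop_app.
  destruct NP as [_ NP]. rewrite NP, (scale_one HT). reflexivity.
Qed.

Lemma steering {A C : Sys T} (P : TR I (sysC A C)) :
  normalized eff P -> pure_state P ->
  forall d, refines d (marginal eff P) -> exists b, d = cond b P.
Proof.
  intros NP PurP d Hd.
  destruct (refinement_split _ _ Hd) as [Hom|[s [l [Ht Hom]]]].
  - exists (eff C). rewrite <- Hom. reflexivity.
  - assert (Nom : pr (eff A) (addT d s) = 1) by (rewrite <- Hom; apply (marginal_normalized P NP)).
    destruct (steering_witness d s l Ht Nom) as [Y [Phi [b [NPhi [PurPhi [MPhi Hb]]]]]].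
    destruct (purifications_steer P Phi NP PurP NPhi PurPhi (eq_trans MPhi (eq_sym Hom)) b)
      as [c Hc].
    exists c. rewrite <- Hb. exact Hc.
Qed.

Lemma inSpan_mono {A B : Sys T} (P1 P2 : TR A B -> Prop) v :
  (forall x, P1 x -> P2 x) -> inSpan P1 v -> inSpan P2 v.
Proof. intros H [l [Hl ->]]. exists l. split; auto. eapply Forall_impl; [|eauto]. auto. Qed.

(* By local discriminability, physical transformations agreeing on all
   states of their input are equal. *)
Lemma transf_eq_of_states {A B : Sys T} (f g : TR A B) :
  phys f -> phys g -> (forall v : TR I A, seqT f v = seqT g v) -> f = g.
Proof.
  intros Pf Pg Hall. apply (transf_sep HT). intros S v Pv. apply NNPP. intro Hne.
  assert (Phf : forall h : TR A B, phys h -> phys (seqT (parT h (idT S)) v)).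
  { intros h Ph. apply phys_seq; auto. apply phys_par; auto. apply phys_id. }
  destruct (Hld _ _ _ _ (Phf f Pf) (Phf g Pg) Hne) as [a [b [Pa [Pb Hab]]]].
  apply Hab. rewrite !(seq_assoc HT), !eop_seq, !(seq_idr HT), <- !pr_cond, <- !(seq_assoc HT), Hall.
  reflexivity.
Qed.

(* Internal marginal => dynamically faithful: by steering every state of [A]
   is a conditional state [cond b P], on which [f] and [g] agree. *)
Lemma faithful_of_internal {A C : Sys T} (P : TR I (sysC A C)) :
  normalized eff P -> pure_state P -> internal (marginal eff P) -> dynamically_faithful P.
Proof.
  intros NP PurP [_ Hspan] B f g Pf Pg Heq.
  apply transf_eq_of_states; auto. intros v.
  destruct (cond_span P v (inSpan_mono _ _ v (steering P NP PurP) (Hspan v))) as [b ->].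
  rewrite <- !cond_seq_par, Heq. reflexivity.
Qed.

(* Apply
   faithfulness to the measure-and-prepare channels [omega . a], [omega . a']. *)
Lemma faithful_effects_eq {A C : Sys T} (P : TR I (sysC A C)) :
  normalized eff P -> dynamically_faithful P ->
  forall a a', phys a -> phys a' -> (forall c, pr a (cond c P) = pr a' (cond c P)) -> a = a'.
Proof.
  intros NP HF a a' Pa Pa' H.
  destruct (marginal_normalized P NP) as [Pom Nom]. rewrite marginal_cond in Pom, Nom.
  set (om := cond (eff C) P) in *.
  assert (K : forall b : TR A I, seqT (eff A) (seqT om b) = b).
  { intros b. rewrite (seq_assoc HT), (scalar_id (seqT (eff A) om)), Nom, (scale_one HT), (seq_idl HT).
    reflexivity. }
  rewrite <- (K a), <- (K a'). f_equal.
  apply (HF A); try (apply phys_seq; auto).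
  apply NNPP. intro Hne.
  assert (Pf : forall b : TR A I, phys b -> phys (seqT (parT (seqT om b) (idT C)) P)).
  { intros b Pb. apply phys_seq; [|apply NP]. apply phys_par; [apply phys_seq; auto|apply phys_id]. }
  destruct (Hld _ _ _ _ (Pf a Pa) (Pf a' Pa') Hne) as [x [c [Px [Pc Hxc]]]].
  apply Hxc. rewrite <- !pr_cond, !cond_seq_par, <- !(seq_assoc HT).
  rewrite (scalar_id (seqT a _)), (scalar_id (seqT a' _)), H. reflexivity.
Qed.

Fixpoint vecL {A : Sys T} (L : list (TR I A)) (x : nat -> R) : TR I A :=
  match L with
  | [] => zeroT
  | v :: L' => addT (scaleT (x O) v) (vecL L' (fun i => x (S i)))
  end.

Definition rho {A : Sys T} (L : list (TR I A)) (a : TR A I) (j : nat) : R :=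
  pr a (nth j L zeroT).

Lemma pr_vecL {A : Sys T} (L : list (TR I A)) a x : pr a (vecL L x) = dot (length L) (rho L a) x.
Proof.
  revert x; induction L as [|v L IH]; intros; simpl; [apply pr_zero|].
  rewrite (seq_addr HT), (prob_add HT), (seq_scaler HT), (prob_scale HT), IH. unfold rho. simpl. ring.
Qed.

Lemma vecL_zero {A : Sys T} (L : list (TR I A)) : vecL L (fun _ => 0) = zeroT.
Proof. induction L; simpl; auto. rewrite IHL, (scale_zero HT), (add_zero HT). auto. Qed.

Lemma vecL_add {A : Sys T} (L : list (TR I A)) x y :
  vecL L (fun i => x i + y i) = addT (vecL L x) (vecL L y).
Proof.
  revert x y; induction L; intros; simpl; [rewrite (add_zero HT); auto|].
  rewrite IHL, (scale_addl HT), <- !(add_assoc HT). f_equal.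
  rewrite !(add_assoc HT). f_equal. apply (add_comm HT).
Qed.

Lemma vecL_scale {A : Sys T} (L : list (TR I A)) r x : vecL L (fun i => r * x i) = scaleT r (vecL L x).
Proof.
  revert x; induction L; intros; simpl.
  - rewrite <- (scale_zero HT _ _ (zeroT (A:=I) (B:=A))), (scale_assoc HT), Rmult_0_r. auto.
  - rewrite IHL, (scale_addr HT), (scale_assoc HT). auto.
Qed.

Lemma vecL_ext {A : Sys T} (L : list (TR I A)) x y :
  (forall j, (j < length L)%nat -> x j = y j) -> vecL L x = vecL L y.
Proof.
  revert x y; induction L; intros x y H; simpl; auto. rewrite H by (simpl; lia). f_equal.
  apply IHL. intros; apply H; simpl; lia.
Qed.

Lemma vecL_in {A : Sys T} (L : list (TR I A)) e : In e L -> exists x, vecL L x = e.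
Proof.
  induction L as [|v L IH]; simpl; intros H; [destruct H|].
  destruct H as [<-|H].
  - exists (fun i => match i with O => 1 | _ => 0 end). simpl.
    rewrite vecL_zero, (add_zero HT), (scale_one HT). auto.
  - destruct (IH H) as [x Hx]. exists (fun i => match i with O => 0 | S k => x k end). simpl.
    rewrite (scale_zero HT), add_zero_l. auto.
Qed.

Lemma vecL_span {A : Sys T} (L : list (TR I A)) v :
  inSpan (fun e => In e L) v -> exists x, vecL L x = v.
Proof.
  intros [l [Hl ->]]. induction l as [|[r e] l IH]; simpl.
  - exists (fun _ => 0). apply vecL_zero.
  - inversion Hl as [|? ? He Hl']; subst. destruct (vecL_in L e He) as [xe Hxe].
    destruct (IH Hl') as [xl Hxl].
    exists (fun i => r * xe i + xl i). rewrite vecL_add, vecL_scale, Hxe, Hxl. auto.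
Qed.

Lemma rho_comb {A : Sys T} (L : list (TR I A)) p (a b : TR A I) j :
  rho L (addT (scaleT p a) (scaleT (1 - p) b)) j = p * rho L a j + (1 - p) * rho L b j.
Proof. unfold rho. rewrite (seq_addl HT), !(seq_scalel HT), (prob_add HT), !(prob_scale HT). auto. Qed.

Definition cond_coords {A C : Sys T} (L : list (TR I A)) (P : TR I (sysC A C)) (x : nat -> R) : Prop :=
  exists c, vecL L x = cond c P.

(* Dual coordinates of nonnegative multiples of differences of physical
   effects; by convexity these form a subspace. *)
Definition effect_diffs {A : Sys T} (L : list (TR I A)) (y : nat -> R) : Prop :=
  exists k a a', 0 <= k /\ phys a /\ phys a' /\ forall j, y j = k * (rho L a j - rho L a' j).

Lemma cond_coords_subspace {A C : Sys T} (L : list (TR I A)) (P : TR I (sysC A C)) :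
  subspace (cond_coords L P).
Proof.
  split; [|split].
  - exists zeroT. rewrite vecL_zero, cond_zero. auto.
  - intros x y [c Hc] [c' Hc']. exists (addT c c'). rewrite vecL_add, cond_add, Hc, Hc'. auto.
  - intros r x [c Hc]. exists (scaleT r c). rewrite vecL_scale, cond_scale, Hc. auto.
Qed.

Hypothesis Hcv : convexity T.

Lemma effect_diffs_subspace {A : Sys T} (L : list (TR I A)) : subspace (effect_diffs L).
Proof.
  assert (PZ := phys_zero_eff A).
  split; [|split].
  - exists 0, zeroT, zeroT. repeat split; auto; [lra|intros; ring].
  - intros x y [k [a [a' [Hk [Pa [Pa' Hx]]]]]] [k' [b [b' [Hk' [Pb [Pb' Hy]]]]]].
    destruct (Req_dec (k + k') 0) as [H0|H0].
    + exists 0, zeroT, zeroT. repeat split; auto; [lra|]. intros j. rewrite Hx, Hy.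
      replace k with 0 by lra. replace k' with 0 by lra. ring.
    + (* a convex combination with weight [k / (k + k')] *)
      set (p := k / (k + k')).
      assert (Hp : 0 <= p <= 1).
      { assert (0 < k + k') by lra. unfold p. split.
        - apply Rmult_le_pos; auto. left. apply Rinv_0_lt_compat; auto.
        - apply (Rmult_le_reg_r (k + k')); auto. unfold Rdiv. rewrite Rmult_assoc, Rinv_l by lra. lra. }
      exists (k + k'), (addT (scaleT p a) (scaleT (1 - p) b)), (addT (scaleT p a') (scaleT (1 - p) b')).
      repeat split; auto; [lra|]. intros j. rewrite !rho_comb, Hx, Hy. unfold p. field. lra.
  - intros r x [k [a [a' [Hk [Pa [Pa' Hx]]]]]].
    destruct (Rle_dec 0 r).
    + exists (r * k), a, a'. repeat split; auto; [apply Rmult_le_pos; auto|]. intros j. rewrite Hx. ring.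
    + exists (- r * k), a', a. repeat split; auto; [apply Rmult_le_pos; lra|]. intros j. rewrite Hx. ring.
Qed.

Lemma effect_diffs_orthogonal {A C : Sys T} (L : list (TR I A)) (P : TR I (sysC A C)) x :
  (forall y, effect_diffs L y -> dot (length L) y x = 0) -> cond_coords L P x.
Proof.
  intros Hx. exists zeroT. rewrite cond_zero. apply state_eq. intros a Pa.
  rewrite pr_zero, pr_vecL. apply Hx. exists 1, a, zeroT. repeat split; auto; [lra|apply phys_zero_eff|].
  intros j. unfold rho. rewrite seq_zero_l, prob_zero. ring.
Qed.

Lemma cond_coords_orthogonal {A C : Sys T} (L : list (TR I A)) (P : TR I (sysC A C)) :
  (forall v, inSpan (fun e => In e L) v) -> normalized eff P -> dynamically_faithful P ->
  forall y, effect_diffs L y -> (forall x, cond_coords L P x -> dot (length L) y x = 0) ->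
  forall j, (j < length L)%nat -> y j = 0.
Proof.
  intros HL NP HF y [k [a [a' [Hk [Pa [Pa' Hy]]]]]] Hort j _. rewrite Hy.
  destruct (Req_dec k 0) as [->|Hk0]; [ring|].
  assert (Haa : a = a').
  { apply (faithful_effects_eq P NP HF a a' Pa Pa'). intros c.
    destruct (vecL_span L (cond c P) (HL _)) as [x Hx].
    specialize (Hort x (ex_intro _ c Hx)).
    rewrite (dot_ext _ y (fun j => k * (rho L a j - rho L a' j)) x x), dot_lin_l in Hort by auto.
    rewrite <- Hx, !pr_vecL. apply Rmult_integral in Hort. destruct Hort; lra. }
  subst. ring.
Qed.

Lemma faithful_states_cond {A C : Sys T} (P : TR I (sysC A C)) :
  normalized eff P -> dynamically_faithful P -> forall v : TR I A, exists c, v = cond c P.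
Proof.
  intros NP HF v.
  destruct (states_findim HT A) as [L HL].
  destruct (vecL_span L v (HL v)) as [x <-].
  destruct (subspace_full (length L) _ _ (cond_coords_subspace L P) (effect_diffs_subspace L)
              (effect_diffs_orthogonal L P) (cond_coords_orthogonal L P HL NP HF) x)
    as [x' [[c Hc] Hx']].
  exists c. rewrite <- Hc. apply vecL_ext. intros j Hj. symmetry. auto.
Qed.

(* Dynamically faithful => internal marginal: every state is [cond c P],
   and [c] is a combination of physical effects [b], each giving a
   refinement [cond b P] of the marginal. *)
Lemma internal_of_faithful {A C : Sys T} (P : TR I (sysC A C)) :
  normalized eff P -> dynamically_faithful P -> internal (marginal eff P).
Proof.
  intros NP HF. split; [apply (marginal_normalized P NP)|].
  intros v. destruct (faithful_states_cond P NP HF v) as [c ->].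
  destruct (span_phys HT C I c) as [l [Hl ->]].
  exists (map (fun p => (fst p, cond (snd p) P)) l). split.
  - rewrite Forall_map. eapply Forall_impl; [|exact Hl]. intros [r b] Hb. simpl in *.
    apply refines_cond; auto. apply refines_self, NP.
  - induction l as [|[r b] l IH]; simpl; [apply cond_zero|].
    inversion Hl; subst. rewrite cond_add, cond_scale, IH; auto.
Qed.

End Operational.

Theorem mainTheorem4 (T : OPTData) (HT : OPTAxioms T)
  (eff : forall A : Sys T, TR A sysI)
  (Hcaus : causal eff)
  (Hld : local_discriminability T)
  (Hcl : states_closed T)
  (Hnd : not_deterministic T)
  (Hcv : convexity T)
  (Hpd : perfectly_distinguishable_exist eff)
  (Hpur : purification_postulate eff) :
  (forall (A C : Sys T) (P : TR sysI (sysC A C)),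
     normalized eff P -> pure_state P ->
     (dynamically_faithful P <-> internal (marginal eff P))) /\
  (forall (A C : Sys T) (w : TR sysI A) (P : TR sysI (sysC A C)),
     internal w -> purification eff w P -> dynamically_faithful P).
Proof.
  split.
  - intros A C P NP PurP. split.
    + apply (internal_of_faithful HT eff Hcaus Hld Hcv P NP).
    + apply (faithful_of_internal HT eff Hcaus Hld Hpd Hpur P NP PurP).
  - intros A C w P Hw [NP [PurP <-]].
    exact (faithful_of_internal HT eff Hcaus Hld Hpd Hpur P NP PurP Hw).
Qed.
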